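(* Let $F$ be a field of characteristic $0$, $V$ an $n$-dimensional $F$-vector space, $G\le\mathrm{GL}(V)$ a finite group generated by pseudo-reflections with degrees $d_1,\dots,d_n$, $M$ an $r$-dimensional $F[G]$-module, and $\chi$ a one-dimensional character of $G$. Suppose $J_{M^*}$ divides $\Delta_\chi$. Then \[ \mathrm{Hilb}\big((\mathrm{S}(V^* )\otimes\wedge M^* )^\chi;q,z\big)=q^{\deg\Delta_\chi}\,\frac{\prod_{i=1}^r(1+zq^{-e_i^{M^*}})}{\prod_{i=1}^n(1-q^{d_i})}. \]
   Context: A pseudo-reflection is $g\in\mathrm{GL}(V)$ with $\dim\ker(g-I)=n-1$. $G$ acts contragrediently on $V^*,M^*$ and hence diagonally on $\mathrm{S}(V^* )\otimes\wedge M^*$ (symmetric algebra tensor exterior algebra), bigraded by (polynomial degree, exterior degree). $W^\chi=\{w: gw=\chi(g)w\ \forall g\}$. $\mathrm{S}(V^* )^G$ is a polynomial algebra on algebraically independent homogeneous invariants of degrees $d_1,\dots,d_n$ (the degrees of $G$). $\Delta_\chi$ is a homogeneous generator of the rank-one free $\mathrm{S}(V^* )^G$-module $\mathrm{S}(V^* )^\chi$. With $N=M^*$: $(\mathrm{S}(V^* )\otimes M)^G$ is a free $\mathrm{S}(V^* )^G$-module with a homogeneous basis $\omega_1^{M^*},\dots,\omega_r^{M^*}$ of bidegrees $(e_i^{M^*},1)$; the $e_i^{M^*}$ are the $M^*$-exponents. Writing $\omega_i^{M^*}=\sum_j J_{ij}\otimes m_j$ for a basis $m_j$ of $M$, $J_{M^*}=\det(J_{ij})$.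 For a bigraded space $W=\bigoplus W_{i,j}$, $\mathrm{Hilb}(W;q,z)=\sum_{i,j}q^iz^j\dim W_{i,j}$. *)

From HB Require Import structures.
From mathcomp Require Import all_boot all_order all_algebra all_fingroup.
From mathcomp Require Import mxrepresentation.
From mathcomp Require Import mpoly.

Set Implicit Arguments.
Unset Strict Implicit.
Unset Printing Implicit Defensive.

Import GRing.Theory.
Local Open Scope ring_scope.

Section Defs.
Variables (F : fieldType) (n : nat) (gT : finGroupType).

(* V = F^n (column vectors), rho g is the matrix of g acting on the left.
   S(V_dual) = {mpoly F[n]}, 'X_i = i-th coordinate function.
   Contragredient action: (g . p)(x) = p (rho(g^-1) x). *)
Definition sact (rho : gT -> 'M[F]_n) (g : gT) (p : {mpoly F[n]}) : {mpoly F[n]} :=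
  p \mPo [tuple \sum_(k < n) rho (g^-1)%g i k *: 'X_k | i < n].

Definition pseudo_reflection (A : 'M[F]_n) : bool :=
  \rank (kermx (A - 1%:M)) == (n - 1)%N.

Definition generated_by_pseudo_reflections (G : {group gT}) (rho : gT -> 'M[F]_n) :=
  (G : {set gT}) = <<[set g in G | pseudo_reflection (rho g)]>>%g.

Definition linear_char (G : {group gT}) (chi : gT -> F) :=
  chi 1%g = 1 /\ {in G &, forall x y, chi (x * y)%g = chi x * chi y}.

Definition invariant (G : {group gT}) rho (p : {mpoly F[n]}) :=
  forall g, g \in G -> sact rho g p = p.
Definition semi_invariant (G : {group gT}) rho (chi : gT -> F) (p : {mpoly F[n]}) :=
  forall g, g \in G -> sact rho g p = chi g *: p.

Definition basic_invariants (G : {group gT}) rho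
    (f : 'I_n -> {mpoly F[n]}) (d : 'I_n -> nat) :=
  [/\ forall i, f i \is (d i).-homog,
      forall i, invariant G rho (f i),
      forall P : {mpoly F[n]}, P \mPo [tuple f i | i < n] = 0 -> P = 0 &
      forall p, invariant G rho p -> exists P : {mpoly F[n]}, p = P \mPo [tuple f i | i < n]].

Definition semi_inv_generator (G : {group gT}) rho chi (Delta : {mpoly F[n]}) (delta : nat) :=
  [/\ Delta \is delta.-homog, Delta != 0,
      semi_invariant G rho chi Delta &
      forall p, semi_invariant G rho chi p ->
        exists c, invariant G rho c /\ p = c * Delta].

Section Module.
Variable r : nat.

(* S(V_dual) (x) M with M = F^r, basis m_j = e_j: elements sum_j w_j (x) m_j,
   encoded as w : {ffun 'I_r -> {mpoly F[n]}}; sigma g acts on the left on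
   column vectors, so g.(p (x) e_j) = (g.p) (x) sum_k sigma(g)_{kj} e_k. *)
Definition smact (rho : gT -> 'M[F]_n) (sigma : gT -> 'M[F]_r) (g : gT)
    (w : {ffun 'I_r -> {mpoly F[n]}}) : {ffun 'I_r -> {mpoly F[n]}} :=
  [ffun k => \sum_(j < r) sigma g k j *: sact rho g (w j)].

Definition sm_invariant (G : {group gT}) rho sigma w :=
  forall g, g \in G -> smact rho sigma g w = w.

Definition sm_comb (c : 'I_r -> {mpoly F[n]}) (om : 'I_r -> {ffun 'I_r -> {mpoly F[n]}}) :
    {ffun 'I_r -> {mpoly F[n]}} :=
  \sum_(i < r) [ffun k => c i * om i k].

(* omega_1..omega_r : homogeneous basis of the free S(V_dual)^G-module
   (S(V_dual) (x) M)^G, omega_i of bidegree (e_i, 1). *)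
Definition exponent_basis (G : {group gT}) rho sigma
    (om : 'I_r -> {ffun 'I_r -> {mpoly F[n]}}) (e : 'I_r -> nat) :=
  [/\ forall i k, om i k \is (e i).-homog,
      forall i, sm_invariant G rho sigma (om i),
      forall w, sm_invariant G rho sigma w ->
        exists c, (forall i, invariant G rho (c i)) /\ w = sm_comb c om &
      forall c, (forall i, invariant G rho (c i)) -> sm_comb c om = 0 ->
        forall i, c i = 0].

Definition jac (om : 'I_r -> {ffun 'I_r -> {mpoly F[n]}}) : {mpoly F[n]} :=
  \det (\matrix_(i < r, j < r) om i j).

(* Entry of A at natural indices (0 outside range). *)
Definition natent (A : 'M[F]_r) (i k : nat) : F :=
  match @insub _ (fun x => x < r)%N 'I_r i, @insub _ (fun x => x < r)%N 'I_r k with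
  | Some i', Some k' => A i' k'
  | _, _ => 0
  end.

Definition minor (A : 'M[F]_r) (T S : {set 'I_r}) : F :=
  \det (\matrix_(a < #|T|, b < #|T|)
          natent A (nth 0%N [seq val x | x <- enum T] a)
                   (nth 0%N [seq val x | x <- enum S] b)).

(* S(V_dual) (x) /\ M_dual : elements sum_S w_S (x) x_S, x_S = x_{s_1}/\.../\x_{s_j}
   (s_1 < ... < s_j), x_k the dual basis of M_dual. Contragredient action on M_dual:
   g . x_k = sum_m sigma(g^-1)_{km} x_m, hence on /\^j M_dual:
   g . x_T = sum_{|S|=|T|} minor(sigma(g^-1); T, S) x_S. *)
Definition wact (rho : gT -> 'M[F]_n) (sigma : gT -> 'M[F]_r) (g : gT)
    (w : {ffun {set 'I_r} -> {mpoly F[n]}}) : {ffun {set 'I_r} -> {mpoly F[n]}} :=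
  [ffun S : {set 'I_r} => \sum_(T : {set 'I_r} | #|T| == #|S|)
                minor (sigma (g^-1)%g) T S *: sact rho g (w T)].

Definition chi_piece (G : {group gT}) rho sigma (chi : gT -> F) (deg j : nat)
    (w : {ffun {set 'I_r} -> {mpoly F[n]}}) : Prop :=
  [/\ forall S : {set 'I_r}, #|S| != j -> w S = 0,
      forall S, w S \is deg.-homog &
      forall g, g \in G -> wact rho sigma g w = chi g *: w].

End Module.
End Defs.

Section Dim.
Variables (F : fieldType) (W : lmodType F).

Definition lin_indep k (v : 'I_k -> W) :=
  forall c : 'I_k -> F, \sum_(i < k) c i *: v i = 0 -> forall i, c i = 0.

Definition has_dim (P : W -> Prop) (k : nat) :=
  (exists v : 'I_k -> W, (forall i, P (v i)) /\ lin_indep v) /\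
  (forall v : 'I_k.+1 -> W, (forall i, P (v i)) -> ~ lin_indep v).
End Dim.

(* Coefficients of q^delta * prod_i (1 + z q^{-e_i}) / prod_i (1 - q^{d_i})
   in F((q))[z]: the coefficient of q^m in 1/prod(1-q^{d_i}) is the number of
   (k_i) in N^n with sum k_i d_i = m (0 for m < 0). *)
Definition nsol (n : nat) (d : 'I_n -> nat) (m : int) : nat :=
  match m with
  | Posz m => #|[set k : {ffun 'I_n -> 'I_m.+1} | (\sum_(i < n) k i * d i == m)%N]|
  | Negz _ => 0%N
  end.

Definition rhs_coef (n r : nat) (d : 'I_n -> nat) (e : 'I_r -> nat) (delta : nat)
    (a : int) (j : nat) : nat :=
  (\sum_(S : {set 'I_r} | #|S| == j) nsol d (a - delta%:Z + (\sum_(i in S) e i)%N%:Z))%N.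

From Pilot Require Import Defs.
From HB Require Import structures.
From mathcomp Require Import all_boot all_order all_algebra all_fingroup.
From mathcomp Require Import mxrepresentation.
From mathcomp Require Import mpoly ssrcomplements.
From mathcomp Require Import zify.

Set Implicit Arguments.
Unset Strict Implicit.
Unset Printing Implicit Defensive.

Import GRing.Theory.
Local Open Scope ring_scope.

(* Write S for the symmetric algebra of the dual of V.  Let Omega be the
   r x r matrix of coefficients of the exponent basis, so that J = det Omega,
   and C_j(Omega) its j-th compound matrix (its j x j minors).  Invariance of
   the omega_i gives g.Omega = Omega sigma(g^-1)^T, so by Cauchy-Binet the map
   w |-> C(Omega) w turns the diagonal action on S (x) /\(dual of M) into the
   action on the polynomial coordinates alone; it is injective because
   det Omega <> 0.  Hence w is chi-semi-invariant iff every coordinate of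
   C(Omega) w lies in S^chi = S^G Delta.  Writing Delta = Q det Omega, the
   vectors Phi_T := Q (column T of the higher adjugate of Omega) satisfy
   C(Omega) Phi_T = Delta e_T, so the chi-semi-invariants are free over S^G on
   the Phi_T, of bidegree (deg Delta - sum_(i in T) e_i, |T|).  Each bigraded
   piece therefore has the basis of products of the Phi_T with monomials in
   the basic invariants, and counting these monomials gives the coefficients
   of the series. *)

Section ReplaceRows.
Variable R : comPzRingType.

Definition replace_rows m j (N : 'M[R]_m) (s : 'I_j -> nat) (W : 'M[R]_(j, m)) : 'M[R]_m :=
  \matrix_(i, k) if [pick a | s a == i] is Some a then W a k else N i k.

Variables (m j : nat) (N : 'M[R]_m) (s : 'I_j -> nat).
Hypothesis s_inj : injective s.

Lemma replace_rows_in (W : 'M[R]_(j, m)) a (i : 'I_m) k :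
  s a = i -> replace_rows N s W i k = W a k.
Proof.
move=> sa; rewrite mxE; case: pickP => [b /eqP sb|/(_ a)]; last by rewrite sa eqxx.
by rewrite (s_inj (etrans sb (esym sa))).
Qed.

Lemma replace_rows_out (W : 'M[R]_(j, m)) (i : 'I_m) k :
  (forall a, s a != i) -> replace_rows N s W i k = N i k.
Proof. by move=> h; rewrite mxE; case: pickP => [a sa|//]; have := h a; rewrite sa. Qed.

Hypothesis s_lt : forall a, (s a < m)%N.
Let so a : 'I_m := Ordinal (s_lt a).

Lemma so_inj : injective so.
Proof. by move=> a b /(congr1 val) /= /s_inj. Qed.

Lemma replace_rows_xrow (W : 'M[R]_(j, m)) a b :
  replace_rows N s (xrow a b W) = xrow (so a) (so b) (replace_rows N s W).
Proof.
apply/matrixP => i k; rewrite [in RHS]/xrow /row_perm [in RHS]mxE.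
case: (pickP (fun c => s c == i)) => [c /eqP sc | none].
  have -> : i = so c by apply/val_inj.
  rewrite (replace_rows_in _ (a := c)) // /xrow /row_perm mxE.
  case: tpermP => [->|->|/eqP ne1 /eqP ne2].
  - by rewrite tpermL (replace_rows_in _ (a := b)).
  - by rewrite tpermR (replace_rows_in _ (a := a)).
  - by rewrite tpermD ?(replace_rows_in _ (a := c)) //;
      [apply: contra ne1 | apply: contra ne2] => /eqP/so_inj ->.
have outside c : s c != i by rewrite none.
rewrite tpermD ?replace_rows_out //; apply/eqP => /(congr1 val) /= si.
  by move: (outside a); rewrite si eqxx.
by move: (outside b); rewrite si eqxx.
Qed.

Lemma det_replace_rows_perm (t : 'S_j) (W : 'M[R]_(j, m)) :
  \det (replace_rows N s (row_perm t W)) = (-1) ^+ t * \det (replace_rows N s W).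
Proof.
case: (prod_tpermP t) => ts -> dts.
elim: ts dts W => [|u ts IH] /= dts W.
  by rewrite big_nil row_perm1 odd_perm1 expr0 mul1r.
case/andP: dts => du dts.
rewrite big_cons row_permM -/(xrow u.1 u.2 _) replace_rows_xrow xrowE det_mulmx det_perm.
rewrite odd_tperm (inj_eq so_inj) du IH // odd_permM signr_addb odd_tperm du.
by rewrite expr1 !mulN1r mulNr.
Qed.

Lemma prod_replace_rows (W : 'M[R]_(j, m)) (t : 'S_m) :
  \prod_i replace_rows N s W i (t i) =
  (\prod_(i | i \notin codom so) N i (t i)) * \prod_a W a (t (so a)).
Proof.
rewrite (bigID (mem (codom so))) /= mulrC; congr (_ * _).
  apply: eq_bigr => i hi; rewrite replace_rows_out // => a; apply/eqP => sa.
  by move/negP: hi; apply; apply/codomP; exists a; apply/val_inj.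
rewrite (eq_bigl (mem (so @: setT))); last first.
  by move=> i /=; apply/codomP/imsetP => [[a ->]|[a _ ->]]; exists a.
rewrite big_imset /=; last by move=> a b _ _ /so_inj.
by apply: eq_big => [a|a _]; [rewrite inE | rewrite (replace_rows_in _ (a := a))].
Qed.

Lemma det_replace_rows_mul_expand p (X : 'M[R]_(j, p)) (V : 'M[R]_(p, m)) :
  \det (replace_rows N s (X *m V)) = \sum_(g : {ffun 'I_j -> 'I_p})
     (\prod_a X a (g a)) * \det (replace_rows N s (\matrix_(a, k) V (g a) k)).
Proof.
rewrite /determinant.
under eq_bigr => t _ do rewrite prod_replace_rows.
under [RHS]eq_bigr => g _ do rewrite big_distrr /=.
rewrite exchange_big /=; apply: eq_bigr => t _.
under [RHS]eq_bigr => g _ do rewrite prod_replace_rows mulrCA.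
rewrite -big_distrr /=; congr (_ * _).
under [RHS]eq_bigr => g _ do rewrite mulrCA.
rewrite -big_distrr /=; congr (_ * _).
under eq_bigr => a _ do rewrite mxE.
rewrite bigA_distr_bigA /=; apply: eq_bigr => g _.
by rewrite -big_split /=; apply: eq_bigr => a _; rewrite mxE.
Qed.

End ReplaceRows.

Section EnumNat.
Variable r : nat.
Implicit Types T S : {set 'I_r}.

Definition enum_nat T (a : nat) : nat := nth 0%N [seq val x | x <- enum T] a.

Lemma size_enum_nat T : size [seq val x | x <- enum T] = #|T|.
Proof. by rewrite size_map -cardE. Qed.

Lemma enum_natP T a : (a < #|T|)%N -> exists2 t : 'I_r, t \in T & enum_nat T a = t.
Proof.
move=> ha; have : enum_nat T a \in [seq val x | x <- enum T].
  by rewrite mem_nth ?size_enum_nat.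
by case/mapP => t; rewrite mem_enum => tT ->; exists t.
Qed.

Lemma enum_nat_lt T a : (a < #|T|)%N -> (enum_nat T a < r)%N.
Proof. by case/enum_natP => t _ ->. Qed.

Lemma enum_nat_inj T a b :
  (a < #|T|)%N -> (b < #|T|)%N -> enum_nat T a = enum_nat T b -> a = b.
Proof.
move=> ha hb /eqP; rewrite /enum_nat nth_uniq ?size_enum_nat //; first by move/eqP.
by rewrite map_inj_uniq ?enum_uniq //; apply: val_inj.
Qed.

Lemma enum_nat_index T (t : 'I_r) : t \in T ->
  (index t (enum T) < #|T|)%N /\ enum_nat T (index t (enum T)) = t.
Proof.
move=> tT; rewrite cardE index_mem mem_enum tT; split=> //.
by rewrite /enum_nat -(index_map val_inj) nth_index // map_f // mem_enum.
Qed.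

Lemma enum_nat_enum_val T (a : 'I_#|T|) : enum_nat T a = val (enum_val a).
Proof. by rewrite /enum_nat /enum_val (nth_map (enum_default a)) // -cardE. Qed.

Lemma enum_nat_notin S a : (a < #|S|)%N -> forall t : 'I_r, t \notin S -> enum_nat S a != t.
Proof. by case/enum_natP=> u uS -> t tS; apply: contra tS => /eqP/val_inj <-. Qed.

Lemma exists_notin_eq_card T S : #|T| = #|S| -> T != S -> exists2 t, t \in T & t \notin S.
Proof.
move=> c nTS; have : ~~ (T \subset S).
  by apply: contra nTS => sTS; rewrite eqEcard sTS c leqnn.
by case/subsetPn => t tT tS; exists t.
Qed.

End EnumNat.

Section CauchyBinet.
Variable R : comPzRingType.

Definition nat_col j p (X : 'M[R]_(j, p)) (a : 'I_j) (k : nat) : R :=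
  if @insub _ (fun x => x < p)%N 'I_p k is Some k' then X a k' else 0.
Definition nat_row p m (V : 'M[R]_(p, m)) (k : nat) (c : 'I_m) : R :=
  if @insub _ (fun x => x < p)%N 'I_p k is Some k' then V k' c else 0.

Lemma sum_injective_ffun j p (x0 : 'I_j -> 'I_p) (Fg : {ffun 'I_j -> 'I_p} -> R) :
  \sum_(g : {ffun 'I_j -> 'I_p} | injectiveb g) Fg g =
  \sum_(U : {set 'I_p} | #|U| == j) \sum_(t : 'S_j) Fg [ffun a => nth (x0 a) (enum U) (t a)].
Proof.
rewrite (partition_big (fun g : {ffun 'I_j -> 'I_p} => g @: setT) (fun U => #|U| == j)) /=;
  last by move=> g /injectiveP g_inj; rewrite card_imset // cardsT card_ord.
apply: eq_bigr => U /eqP cU.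
pose h (t : 'S_j) : {ffun 'I_j -> 'I_p} := [ffun a => nth (x0 a) (enum U) (t a)].
have szU : size (enum U) = j by rewrite -cardE cU.
have nth_enum_inj x y (a b : 'I_j) : nth x (enum U) a = nth y (enum U) b -> a = b.
  rewrite (set_nth_default x y) ?szU ?ltn_ord // => /eqP.
  by rewrite nth_uniq ?szU ?ltn_ord ?enum_uniq // => /eqP /val_inj.
have h_inj : injective h.
  by move=> t1 t2 /ffunP e12; apply/permP => a; have := e12 a; rewrite !ffunE => /nth_enum_inj.
transitivity (\sum_(t in [set: 'S_j]) Fg (h t)); last by apply: eq_bigl => t; rewrite in_setT.
rewrite -(big_imset Fg (h := h)) /=; last by move=> ? ? _ _; apply: h_inj.
apply: eq_bigl => g; apply/idP/idP.
  case/andP => /injectiveP g_inj /eqP gU.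
  have g_in a : g a \in enum U by rewrite mem_enum -gU imset_f ?inE.
  have ltj a : (index (g a) (enum U) < j)%N by move: (g_in a); rewrite -index_mem szU.
  pose k a := Ordinal (ltj a).
  have k_inj : injective k.
    move=> a b /(congr1 val) /= e; apply: g_inj.
    by rewrite -(nth_index (x0 a) (g_in a)) e nth_index.
  apply/imsetP; exists (perm k_inj); first by rewrite inE.
  by apply/ffunP => a; rewrite ffunE permE /= nth_index.
case/imsetP => t _ ->; apply/andP; split.
  by apply/injectiveP => a b; rewrite !ffunE => /nth_enum_inj /perm_inj.
rewrite eqEcard card_imset ?cardsT ?card_ord ?cU ?leqnn ?andbT //;
  last by move=> a b; rewrite !ffunE => /nth_enum_inj /perm_inj.
apply/subsetP => y /imsetP [a _ ->]; rewrite ffunE -mem_enum mem_nth ?szU //.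
Qed.

Variables (m j : nat) (N : 'M[R]_m) (s : 'I_j -> nat).
Hypotheses (s_inj : injective s) (s_lt : forall a, (s a < m)%N).

Lemma det_replace_rows_mul p (X : 'M[R]_(j, p)) (V : 'M[R]_(p, m)) :
  \det (replace_rows N s (X *m V)) = \sum_(U : {set 'I_p} | #|U| == j)
     \det (\matrix_(a, b) nat_col X a (enum_nat U b)) *
     \det (replace_rows N s (\matrix_(a, k) nat_row V (enum_nat U a) k)).
Proof.
pose so a : 'I_m := Ordinal (s_lt a).
rewrite (det_replace_rows_mul_expand _ s_inj s_lt).
rewrite (bigID (fun g : {ffun _} => injectiveb g)) /= [X in _ + X]big1 ?addr0; last first.
  move=> g /injectivePn [a [b nab gab]].
  rewrite (@determinant_alternate _ _ _ (so a) (so b)) ?mulr0 //.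
    by apply: contra nab => /eqP /(congr1 val) /= /s_inj ->.
  move=> k; rewrite (@replace_rows_in _ _ _ N s s_inj _ a) //.
  by rewrite (@replace_rows_in _ _ _ N s s_inj _ b) // !mxE gab.
case: (leqP j p) => hjp; last first.
  rewrite big_pred0; last first.
    by move=> g; apply/negbTE/negP => /injectiveP /leq_card; rewrite !card_ord leqNgt hjp.
  rewrite big_pred0 // => U; apply/negbTE/eqP => cU.
  by move: (max_card (mem U)); rewrite cU card_ord leqNgt hjp.
pose x0 a : 'I_p := widen_ord hjp a.
rewrite (sum_injective_ffun x0); apply: eq_bigr => U /eqP cU.
have szU : size (enum U) = j by rewrite -cardE cU.
have rows_perm (t : 'S_j) : \matrix_(a, k) V ([ffun a => nth (x0 a) (enum U) (t a)] a) k =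
    row_perm t (\matrix_(a, k) nat_row V (enum_nat U a) k).
  apply/matrixP => a k; rewrite !mxE ffunE /nat_row /enum_nat.
  by rewrite (nth_map (x0 a)) ?szU // valK.
under eq_bigr => t _ do rewrite rows_perm (det_replace_rows_perm _ s_inj s_lt).
rewrite [\det (\matrix_(a, b) _)]/determinant big_distrl /=; apply: eq_bigr => t _.
rewrite mulrA [_ * (-1) ^+ t]mulrC; congr (_ * _ * _).
apply: eq_bigr => a _; rewrite !mxE ffunE /nat_col /enum_nat.
by rewrite (nth_map (x0 a)) ?szU // valK.
Qed.

End CauchyBinet.

Section Compound.
Variable R : comPzRingType.

Definition nat_entry r (A : 'M[R]_r) (i k : nat) : R :=
  match @insub _ (fun x => x < r)%N 'I_r i, @insub _ (fun x => x < r)%N 'I_r k with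
  | Some i', Some k' => A i' k'
  | _, _ => 0
  end.

Lemma nat_entry_ord r (A : 'M[R]_r) (i k : 'I_r) : nat_entry A i k = A i k.
Proof. by rewrite /nat_entry !valK. Qed.

Lemma nat_entry_outl r (A : 'M[R]_r) i k : (r <= i)%N -> nat_entry A i k = 0.
Proof. by move=> h; rewrite /nat_entry insubF //= ltnNge h. Qed.

Lemma nat_entry_outr r (A : 'M[R]_r) i k : (r <= k)%N -> nat_entry A i k = 0.
Proof. by move=> h; rewrite /nat_entry [insub k]insubF /= ?ltnNge ?h //; case: insub. Qed.

Lemma nat_entry_tr r (A : 'M[R]_r) i k : nat_entry A^T i k = nat_entry A k i.
Proof.
rewrite /nat_entry.
by case: (insub i : option 'I_r) => [?|]; case: (insub k : option 'I_r) => [?|] //; rewrite mxE.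
Qed.

Lemma nat_entryZ r (c : R) (A : 'M[R]_r) i k : nat_entry (c *: A) i k = c * nat_entry A i k.
Proof.
rewrite /nat_entry.
by case: (insub i : option 'I_r) => [?|]; case: (insub k : option 'I_r) => [?|];
  rewrite ?mxE ?mulr0.
Qed.

Definition compound j r (A : 'M[R]_r) (T S : {set 'I_r}) : R :=
  \det (\matrix_(a < j, b < j) nat_entry A (enum_nat T a) (enum_nat S b)).

Lemma det_zero_row n (M : 'M[R]_n) a : (forall b, M a b = 0) -> \det M = 0.
Proof. by move=> h; rewrite (expand_det_row _ a) big1 // => b _; rewrite h mul0r. Qed.

Lemma replace_rows_id j (N W : 'M[R]_j) : replace_rows N (fun a : 'I_j => nat_of_ord a) W = W.
Proof. by apply/matrixP => i k; rewrite (@replace_rows_in _ _ _ N _ _ W i) //; apply: val_inj. Qed.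

Lemma nat_entry_mul r (A B : 'M[R]_r) i l :
  nat_entry (A *m B) i l = \sum_(k < r) nat_entry A i k * nat_entry B k l.
Proof.
rewrite /nat_entry; case: insubP => [i' _ _|_]; last by rewrite big1 // => k _; rewrite mul0r.
case: insubP => [l' _ _|_]; last by rewrite big1 // => k _; rewrite valK /= mulr0.
by rewrite mxE; apply: eq_bigr => k _; rewrite valK.
Qed.

Lemma nat_col_nat_entry j r (A : 'M[R]_r) (g : 'I_j -> nat) a k :
  nat_col (\matrix_(a < j, k < r) nat_entry A (g a) k) a k = nat_entry A (g a) k.
Proof.
rewrite /nat_col; case: insubP => [k' _ <-|kn]; first by rewrite mxE.
by rewrite nat_entry_outr // leqNgt.
Qed.

Lemma nat_row_nat_entry j r (A : 'M[R]_r) (g : 'I_j -> nat) (a : nat) (k : 'I_j) :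
  nat_row (\matrix_(k < r, b < j) nat_entry A k (g b)) a k = nat_entry A a (g k).
Proof.
rewrite /nat_row; case: insubP => [a' _ <-|an]; first by rewrite mxE.
by rewrite nat_entry_outl // leqNgt.
Qed.

Lemma compound_mul j r (A B : 'M[R]_r) (T S : {set 'I_r}) :
  compound j (A *m B) T S =
  \sum_(U : {set 'I_r} | #|U| == j) compound j A T U * compound j B U S.
Proof.
pose X := \matrix_(a < j, k < r) nat_entry A (enum_nat T a) k.
pose V := \matrix_(k < r, b < j) nat_entry B k (enum_nat S b).
have -> : compound j (A *m B) T S = \det (replace_rows 0 (fun a : 'I_j => nat_of_ord a) (X *m V)).
  rewrite replace_rows_id /compound; congr (\det _); apply/matrixP => a b.
  by rewrite !mxE nat_entry_mul; apply: eq_bigr => k _; rewrite !mxE.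
rewrite det_replace_rows_mul //; last by move=> a b; apply: val_inj.
apply: eq_bigr => U _; rewrite replace_rows_id /compound; congr (_ * _); congr (\det _).
  by apply/matrixP => a b; rewrite !mxE nat_col_nat_entry.
by apply/matrixP => a b; rewrite !mxE nat_row_nat_entry.
Qed.

Lemma compound1 j r (T S : {set 'I_r}) : #|T| = j -> #|S| = j ->
  compound j (1%:M : 'M[R]_r) T S = (T == S)%:R.
Proof.
move=> cT cS; case: (eqVneq T S) => [<-|nTS].
  transitivity (\det (1%:M : 'M[R]_j)); last by rewrite det1.
  rewrite /compound; congr (\det _); apply/matrixP => a b; rewrite !mxE.
  have [ha hb] : (a < #|T|)%N /\ (b < #|T|)%N by rewrite cT.
  case: (enum_natP ha) => u _ eu; case: (enum_natP hb) => v _ ev.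
  rewrite eu ev nat_entry_ord !mxE; suff -> : (u == v) = (a == b) by [].
  apply/eqP/eqP => [uv|ab].
    by apply/val_inj/(enum_nat_inj ha hb); rewrite eu ev uv.
  by apply: val_inj; rewrite /= -eu -ev ab.
case: (exists_notin_eq_card (etrans cT (esym cS)) nTS) => t tT tS.
case: (enum_nat_index tT) => ha et.
have ha' : (index t (enum T) < j)%N by rewrite -cT.
rewrite /compound (det_zero_row (a := Ordinal ha')) // => b; rewrite mxE /= et.
have hb : (b < #|S|)%N by rewrite cS.
case: (enum_natP hb) => u uS ->; rewrite nat_entry_ord mxE.
by case: eqP => // tu; move: tS; rewrite tu uS.
Qed.

Lemma compound_tr j r (A : 'M[R]_r) (T S : {set 'I_r}) :
  compound j A^T T S = compound j A S T.
Proof.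
by rewrite /compound -det_tr; congr (\det _); apply/matrixP => a b; rewrite !mxE nat_entry_tr.
Qed.

Lemma compoundZ j r (c : R) (A : 'M[R]_r) (T S : {set 'I_r}) :
  compound j (c *: A) T S = c ^+ j * compound j A T S.
Proof.
by rewrite /compound -detZ; congr (\det _); apply/matrixP => a b; rewrite !mxE nat_entryZ.
Qed.

(* Up to sign, the minor of A with the rows S and the columns U deleted. *)
Definition higher_adj j r (A : 'M[R]_r) (U S : {set 'I_r}) : R :=
  \det (replace_rows A (enum_nat S)
         (\matrix_(a < j, k < r) nat_row (1%:M : 'M[R]_r) (enum_nat U a) k)).

Lemma mul_compound_higher_adj j r (A : 'M[R]_r) (S' S : {set 'I_r}) : #|S'| = j -> #|S| = j ->
  \sum_(U : {set 'I_r} | #|U| == j) compound j A S' U * higher_adj j A U S = (S' == S)%:R * \det A.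
Proof.
move=> cS' cS.
have s_inj : injective (fun a : 'I_j => enum_nat S a).
  by move=> a b /enum_nat_inj; rewrite cS => h; apply/val_inj/h.
have s_lt (a : 'I_j) : (enum_nat S a < r)%N by apply: enum_nat_lt; rewrite cS.
pose X := \matrix_(a < j, k < r) nat_entry A (enum_nat S' a) k.
transitivity (\det (replace_rows A (fun a : 'I_j => enum_nat S a) X)).
  rewrite -[X in replace_rows _ _ X]mulmx1 (det_replace_rows_mul A s_inj s_lt X 1%:M).
  apply: eq_bigr => U _; rewrite /compound /higher_adj; congr (_ * _); congr (\det _).
  by apply/matrixP => a b; rewrite !mxE nat_col_nat_entry.
case: (eqVneq S' S) => [<-|nS].
  rewrite mul1r; congr (\det _); apply/matrixP => i k; rewrite mxE.
  by case: pickP => [a /eqP ha|//]; rewrite mxE ha nat_entry_ord.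
rewrite mul0r.
case: (exists_notin_eq_card (etrans cS' (esym cS)) nS) => t tS' tS.
case: (enum_nat_index tS') => ha et.
have ha' : (index t (enum S') < j)%N by rewrite -cS'.
pose a := Ordinal ha'.
pose i0 : 'I_r := Ordinal (s_lt a).
have i0S : i0 \in S.
  have hs : (a < #|S|)%N by rewrite cS.
  by case: (enum_natP hs) => u uS eu; have -> : i0 = u by apply: val_inj; rewrite /= eu.
apply: (@determinant_alternate _ _ _ i0 t); first by apply: contra tS => /eqP <-.
move=> k; rewrite (@replace_rows_in _ _ _ A _ s_inj _ a) // mxE /= et nat_entry_ord.
by rewrite replace_rows_out // => b; apply: enum_nat_notin; rewrite // cS.
Qed.

End Compound.

Lemma nat_entry_map (R R' : comPzRingType) (f : {rmorphism R -> R'}) r (A : 'M[R]_r) i k :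
  nat_entry (map_mx f A) i k = f (nat_entry A i k).
Proof.
rewrite /nat_entry.
by case: (insub i : option 'I_r) => [?|]; case: (insub k : option 'I_r) => [?|];
  rewrite ?mxE ?rmorph0.
Qed.

Lemma compound_map (R R' : comPzRingType) (f : {rmorphism R -> R'}) j r (A : 'M[R]_r)
    (T S : {set 'I_r}) :
  compound j (map_mx f A) T S = f (compound j A T S).
Proof.
rewrite /compound -det_map_mx; congr (\det _).
by apply/matrixP => a b; rewrite !mxE nat_entry_map.
Qed.

Section HomogeneousFacts.
Variables (F : fieldType) (n : nat).
Local Notation R := {mpoly F[n]}.

Lemma dhomog_bigprod (I : Type) (s : seq I) (P : pred I) (p : I -> R) (dg : I -> nat) :
  (forall i, P i -> p i \is (dg i).-homog) ->
  \prod_(i <- s | P i) p i \is (\sum_(i <- s | P i) dg i)%N.-homog.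
Proof.
move=> h; apply: (big_rec2 (fun d (q : R) => q \is d.-homog)); first exact: dhomog1.
by move=> i d q Pi hq; apply: dhomogM => //; apply: h.
Qed.

Lemma det_dhomog j (M : 'M[R]_j) (dg : 'I_j -> nat) :
  (forall a b, M a b \is (dg a).-homog) -> \det M \is (\sum_a dg a)%N.-homog.
Proof.
move=> h; apply: rpred_sum => t _; rewrite rpredMsign.
by apply: dhomog_bigprod => a _; apply: h.
Qed.

Lemma dhomog_factor (p h : R) da de : h \is de.-homog -> h != 0 -> p * h \is da.-homog ->
  p \is (da - de)%N.-homog /\ (p != 0 -> (de <= da)%N).
Proof.
move=> hh nh hph.
pose K := mmeasure mdeg p.
have pE : p = \sum_(t < K) pihomog mdeg t p by apply: pihomog_partitionE.
have off_degree (t : 'I_K) : (t + de)%N != da -> pihomog mdeg t p = 0.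
  move=> nt.
  have : pihomog mdeg (t + de) (p * h) = pihomog mdeg t p * h.
    rewrite {1}pE mulr_suml linear_sum /= (bigD1 t) //= big1 ?addr0.
      by rewrite pihomog_dE //; apply: dhomogM => //; apply: pihomogP.
    move=> u nut; apply: (pihomog_ne0 (d := (u + de)%N)).
      by rewrite eqn_add2r; apply: contra nut => /eqP /val_inj ->.
    by apply: dhomogM => //; apply: pihomogP.
  rewrite (pihomog_ne0 (d := da)) // 1?eq_sym //.
  by move/eqP; rewrite eq_sym mulf_eq0 (negbTE nh) orbF => /eqP.
have {}pE : p = \sum_(t < K | (t + de)%N == da) pihomog mdeg t p.
  rewrite {1}pE (bigID (fun t : 'I_K => (t + de)%N == da)) /=.
  by rewrite [X in _ + X]big1 ?addr0 // => t /off_degree.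
split.
  by rewrite pE; apply: rpred_sum => t /eqP <-; rewrite addnK; apply: pihomogP.
rewrite pE; case: (pickP (fun t : 'I_K => (t + de)%N == da)) => [t /eqP <- _|none].
  by rewrite leq_addl.
by rewrite big_pred0 ?eqxx.
Qed.

End HomogeneousFacts.

Section Dimension.
Variables (F : fieldType) (W : lmodType F).

Lemma span_not_lin_indep (I : finType) (A : {set I}) (v : I -> W) (u : 'I_#|A|.+1 -> W) :
  (forall l, exists c : I -> F, u l = \sum_(i in A) c i *: v i) -> ~ lin_indep u.
Proof.
case/fin_all_exists => x hx indep.
pose X : 'M[F]_(#|A|.+1, #|A|) := \matrix_(l, a) x l (enum_val a).
have : kermx X != 0.
  rewrite kermx_eq0 /row_free; apply/negP => /eqP h.
  by have := rank_leq_col X; rewrite h ltnn.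
case: (pickP (fun i => row i (kermx X) != 0)) => [i hi _|none]; last first.
  by apply/negP/negPn/eqP/row_matrixP => i; move: (none i) => /negbFE/eqP ->; rewrite row0.
pose y l := kermx X i l.
have y_ker (a : 'I_#|A|) : \sum_l y l * x l (enum_val a) = 0.
  transitivity ((kermx X *m X) i a); last by rewrite mulmx_ker mxE.
  by rewrite mxE; apply: eq_bigr => l _; rewrite /y [X l a]mxE.
have : \sum_l y l *: u l = 0.
  under eq_bigr => l _ do rewrite hx scaler_sumr.
  rewrite exchange_big /= big1 // => k kA.
  under eq_bigr => l _ do rewrite scalerA.
  rewrite -scaler_suml; have := y_ker (enum_rank_in kA k).
  by rewrite enum_rankK_in // => ->; rewrite scale0r.
move/indep => y0; apply: (negP hi); apply/eqP/rowP => l.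
by move: (y0 l); rewrite /y !mxE => ->.
Qed.

Lemma has_dim_basis (P : W -> Prop) (I : finType) (A : {set I}) (v : I -> W) :
  (forall i, i \in A -> P (v i)) ->
  (forall c : I -> F, \sum_(i in A) c i *: v i = 0 -> forall i, i \in A -> c i = 0) ->
  (forall w, P w -> exists c : I -> F, w = \sum_(i in A) c i *: v i) ->
  has_dim P #|A|.
Proof.
move=> Pv v_free v_span; split; last by move=> u Pu; apply: span_not_lin_indep => l; apply: v_span.
exists (fun a => v (enum_val a)); split=> [a|c hc a]; first by apply/Pv/enum_valP.
pose c' i := c (enum_rank_in (enum_valP a) i).
have : \sum_(i in A) c' i *: v i = 0.
  by rewrite big_enum_val -[RHS]hc; apply: eq_bigr => b _; rewrite /c' enum_valK_in.
by move/v_free => /(_ (enum_val a) (enum_valP a)); rewrite /c' enum_valK_in.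
Qed.

End Dimension.

Section BasicInvariants.
Variables (F : fieldType) (n : nat) (gT : finGroupType) (G : {group gT})
  (rho : gT -> 'M[F]_n) (f : 'I_n -> {mpoly F[n]}) (d : 'I_n -> nat).
Hypothesis fG : basic_invariants G rho f d.
Local Notation R := {mpoly F[n]}.

Definition inv_monomial (m : 'X_{1..n}) : R := 'X_[m] \mPo [tuple f i | i < n].
Definition wdeg (m : 'X_{1..n}) : nat := (\sum_(i < n) m i * d i)%N.

Lemma inv_monomialE m : inv_monomial m = \prod_(i < n) f i ^+ m i.
Proof. by rewrite /inv_monomial comp_mpolyX; apply: eq_bigr => i _; rewrite tnth_mktuple. Qed.

Lemma inv_monomial_dhomog m : inv_monomial m \is (wdeg m).-homog.
Proof.
case: fG => f_homog _ _ _; rewrite inv_monomialE /wdeg.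
rewrite (eq_bigr (fun i => d i * m i)%N) => [|i _]; last exact: mulnC.
by apply: dhomog_bigprod => i _; apply: dhomogMn.
Qed.

Lemma inv_monomial_invariant m : Defs.invariant G rho (inv_monomial m).
Proof.
case: fG => _ f_inv _ _ g gG; rewrite inv_monomialE /sact rmorph_prod /=.
by apply: eq_bigr => i _; rewrite rmorphXn /= -/(sact rho g (f i)) f_inv.
Qed.

Lemma dhomog0_const (p : R) : p \is 0.-homog -> p = (p@_0)%:MP.
Proof.
move=> hp; apply/mpolyP => m; rewrite mcoeffC.
case: (eqVneq m 0%MM) => [->|nm]; first by rewrite mulr1.
by rewrite mulr0 (dhomog_nemf_coeff hp) // mdeg_eq0.
Qed.

Lemma basic_degree_gt0 i : (0 < d i)%N.
Proof.
case: fG => f_homog _ f_free _; rewrite lt0n; apply/negP => /eqP d0.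
have f_const := dhomog0_const (etrans (congr1 (fun k => f i \is k.-homog) (esym d0)) (f_homog i)).
have /f_free : ('X_i - ((f i)@_0)%:MP) \mPo [tuple f i | i < n] = 0.
  by rewrite raddfB /= comp_mpolyXU comp_mpolyC -tnth_nth tnth_mktuple {1}f_const subrr.
move/(congr1 (mcoeff U_(i)%MM)); rewrite mcoeffB mcoeffXU mcoeffC mcoeff0 eqxx.
have -> : (U_(i)%MM == 0%MM) = false by apply/negbTE; rewrite -mdeg_eq0 mdeg1.
by rewrite mulr0 subr0 => /eqP; rewrite oner_eq0.
Qed.

Lemma mdeg_le_wdeg m : (mdeg m <= wdeg m)%N.
Proof. by rewrite mdegE /wdeg; apply: leq_sum => i _; rewrite leq_pmulr // basic_degree_gt0. Qed.

Lemma inv_monomial_free Nb (B : pred 'X_{1..n < Nb}) (c : 'X_{1..n < Nb} -> F) :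
  \sum_(mu | B mu) c mu *: inv_monomial mu = 0 -> forall mu, B mu -> c mu = 0.
Proof.
case: fG => _ _ f_free _ h mu0 Bmu0.
have : (\sum_(mu | B mu) c mu *: 'X_[val mu]) \mPo [tuple f i | i < n] = 0.
  by rewrite linear_sum -[RHS]h; apply: eq_bigr => mu _; rewrite linearZ.
move/f_free/(congr1 (mcoeff (val mu0))); rewrite raddf_sum mcoeff0 (bigD1 mu0) //= big1.
  by rewrite mcoeffZ mcoeffX eqxx mulr1 addr0.
move=> mu /andP [_ nmu]; rewrite mcoeffZ mcoeffX.
suff -> : (val mu == val mu0) = false by rewrite mulr0.
by apply/negbTE; apply: contra nmu => /eqP /val_inj ->.
Qed.

Lemma invariant_dhomog_span Nb m (c : R) :
  Defs.invariant G rho c -> c \is m.-homog -> (m < Nb)%N ->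
  exists b : 'X_{1..n < Nb} -> F,
    c = \sum_(mu : 'X_{1..n < Nb} | wdeg mu == m) b mu *: inv_monomial mu.
Proof.
case: fG => _ _ _ f_gen c_inv c_homog ltmN; case: (f_gen c c_inv) => P cP.
exists (fun mu => P@_(val mu)).
have -> : c = \sum_(mu <- msupp P | wdeg mu == m) P@_mu *: inv_monomial mu.
  rewrite -(pihomog_dE c_homog) cP comp_mpolyEX linear_sum /= [RHS]big_mkcond /=.
  apply: eq_bigr => mu _; rewrite linearZ /=.
  case: eqP => [<-|nm]; first by rewrite pihomog_dE //; apply: inv_monomial_dhomog.
  by rewrite (pihomog_ne0 (d := wdeg mu)) ?scaler0 //; [apply/eqP | apply: inv_monomial_dhomog].
rewrite (big_mksub_cond 'X_{1..n < Nb}) /=; first last.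
- by move=> x _ /eqP wx; rewrite /= (leq_ltn_trans (mdeg_le_wdeg x)) // wx.
- exact: msupp_uniq.
rewrite [RHS](bigID (fun mu : 'X_{1..n < Nb} => val mu \in msupp P)) /=.
rewrite [X in _ = _ + X]big1 ?addr0 => [|mu /andP [_ /memN_msupp_eq0 ->]]; last exact: scale0r.
by apply: eq_bigl => mu.
Qed.

Lemma card_wdeg Nb m : (m < Nb)%N ->
  #|[set mu : 'X_{1..n < Nb} | wdeg mu == m]| =
  #|[set k : {ffun 'I_n -> 'I_m.+1} | (\sum_(i < n) k i * d i == m)%N]|.
Proof.
move=> ltmN; pose g (mu : 'X_{1..n < Nb}) : {ffun 'I_n -> 'I_m.+1} := [ffun i => inord (val mu i)].
have gK (mu : 'X_{1..n < Nb}) : wdeg mu == m -> forall i, (g mu i : nat) = val mu i.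
  move=> /eqP wmu i; rewrite ffunE inordK // ltnS -wmu.
  by apply: leq_trans (mdeg_le_wdeg _); rewrite mdegE (bigD1 i) //= leq_addr.
rewrite -(card_in_imset (f := g)); last first.
  move=> mu1 mu2; rewrite !inE => h1 h2 /ffunP e12; apply/val_inj/mnmP => i.
  by rewrite -(gK _ h1) -(gK _ h2) e12.
apply: eq_card => k; rewrite [in RHS]inE; apply/imsetP/idP.
  case=> mu; rewrite inE => hmu ->.
  by rewrite (eq_bigr (fun i => (val mu i * d i)%N)) // => i _; rewrite gK.
move=> hk.
have wk : wdeg [multinom (k i : nat) | i < n] = m.
  by rewrite /wdeg (eq_bigr (fun i => (k i * d i)%N)) ?(eqP hk) // => i _; rewrite mnmE.
have ltkN : (mdeg [multinom (k i : nat) | i < n] < Nb)%N.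
  by apply: leq_ltn_trans (mdeg_le_wdeg _) _; rewrite wk.
exists (BMultinom ltkN); first by rewrite inE /= wk.
by apply/ffunP => i; rewrite ffunE /=; apply: val_inj; rewrite /= mnmE inordK.
Qed.

End BasicInvariants.

Section SemiInvariants.
Variables (F : fieldType) (n r : nat) (gT : finGroupType) (G : {group gT})
  (rho : mx_representation F G n) (sigma : mx_representation F G r) (chi : gT -> F)
  (f : 'I_n -> {mpoly F[n]}) (d : 'I_n -> nat) (Delta : {mpoly F[n]}) (delta : nat)
  (omega : 'I_r -> {ffun 'I_r -> {mpoly F[n]}}) (e : 'I_r -> nat).
Hypothesis fG : basic_invariants G rho f d.
Hypothesis DeltaG : semi_inv_generator G rho chi Delta delta.
Hypothesis omegaG : exponent_basis G rho sigma omega e.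

Local Notation R := {mpoly F[n]}.
Local Notation W := {ffun {set 'I_r} -> {mpoly F[n]}}.

Definition sact_rmorph (g : gT) : {rmorphism R -> R} :=
  comp_mpoly [tuple \sum_(k < n) rho (g^-1)%g i k *: 'X_k | i < n].

Lemma sactE g p : sact rho g p = sact_rmorph g p.
Proof. by []. Qed.

Definition Omega : 'M[R]_r := \matrix_(i, k) omega i k.

Lemma jacE : jac omega = \det Omega.
Proof. by []. Qed.

Definition sigma_poly (g : gT) : 'M[R]_r := map_mx (@mpolyC n F) (sigma g).

Lemma Omega_invariant g : g \in G -> map_mx (sact_rmorph g) Omega *m (sigma_poly g)^T = Omega.
Proof.
move=> gG; case: omegaG => _ omega_inv _ _; apply/matrixP => i k; rewrite !mxE.
move/ffunP: (omega_inv i g gG) => /(_ k); rewrite /smact ffunE => <-.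
by apply: eq_bigr => l _; rewrite !mxE mulrC mul_mpolyC.
Qed.

Lemma sact_Omega g : g \in G -> map_mx (sact_rmorph g) Omega = Omega *m (sigma_poly (g^-1)%g)^T.
Proof.
move=> gG; rewrite -{2}(Omega_invariant gG) -mulmxA -trmx_mul /sigma_poly -map_mxM.
by rewrite -repr_mxM ?groupV // mulVg repr_mx1 map_mx1 trmx1 mulmx1.
Qed.

Lemma sact_compound_Omega g j (S' U : {set 'I_r}) : g \in G -> #|U| = j ->
  sact_rmorph g (compound j Omega S' U) =
  \sum_(T : {set 'I_r} | #|T| == j) compound j Omega S' T * (minor (sigma (g^-1)%g) U T)%:MP.
Proof.
move=> gG cU; rewrite -compound_map sact_Omega // compound_mul; apply: eq_bigr => T _.
by rewrite compound_tr /sigma_poly compound_map /minor cU.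
Qed.

Definition wedge_Omega (w : W) : W :=
  [ffun S' : {set 'I_r} =>
     \sum_(T : {set 'I_r} | #|T| == #|S'|) compound #|S'| Omega S' T * w T].

Lemma wedge_Omega_wact g w (S' : {set 'I_r}) : g \in G ->
  wedge_Omega (wact rho sigma g w) S' = sact rho g (wedge_Omega w S').
Proof.
move=> gG; rewrite sactE !ffunE rmorph_sum /=.
under [RHS]eq_bigr => U /eqP cU do
  rewrite rmorphM /= (@sact_compound_Omega g #|S'| S' U gG cU) mulr_suml.
under eq_bigr => T /eqP cT do rewrite ffunE mulr_sumr cT.
rewrite exchange_big /=; apply: eq_bigr => U _; apply: eq_bigr => T _.
by rewrite sactE -mul_mpolyC mulrA.
Qed.

Lemma wedge_Omega_sum (I : finType) (P : pred I) (c : I -> F) (v : I -> W) S' :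
  wedge_Omega (\sum_(i | P i) c i *: v i) S' = \sum_(i | P i) c i *: wedge_Omega (v i) S'.
Proof.
rewrite ffunE; under eq_bigr => T _ do rewrite sum_ffunE mulr_sumr.
rewrite exchange_big; apply: eq_bigr => i _; rewrite ffunE scaler_sumr.
by apply: eq_bigr => T _; rewrite ffunE scalerAr.
Qed.

Lemma wedge_OmegaZ (k : F) w S' : wedge_Omega (k *: w) S' = k *: wedge_Omega w S'.
Proof. by rewrite !ffunE scaler_sumr; apply: eq_bigr => T _; rewrite ffunE scalerAr. Qed.

Lemma wedge_Omega0 S' : wedge_Omega 0 S' = 0.
Proof. by rewrite -(scale0r 0) wedge_OmegaZ scale0r. Qed.

Definition pscale (p : R) (w : W) : W := [ffun T => p * w T].

Lemma wedge_Omega_pscale p w S' : wedge_Omega (pscale p w) S' = p * wedge_Omega w S'.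
Proof. by rewrite !ffunE mulr_sumr; apply: eq_bigr => T _; rewrite ffunE mulrCA. Qed.

(* The Jacobi identity C_j(adj A) C_j(A) = (det A)^j, applied coordinatewise. *)
Lemma wedge_Omega_adj (w : W) (T : {set 'I_r}) :
  \det Omega ^+ #|T| * w T =
  \sum_(S' : {set 'I_r} | #|S'| == #|T|) compound #|T| (\adj Omega) T S' * wedge_Omega w S'.
Proof.
under [RHS]eq_bigr => S' /eqP cS do rewrite ffunE cS mulr_sumr.
rewrite exchange_big /=.
under [RHS]eq_bigr => U _ do
  (under eq_bigr => S' _ do rewrite mulrA; rewrite -mulr_suml -compound_mul).
rewrite mul_adj_mx (bigD1 T) //= big1 ?addr0.
  by rewrite -scalemx1 compoundZ compound1 // eqxx mulr1.
move=> U /andP [/eqP cU nUT].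
by rewrite -scalemx1 compoundZ compound1 // eq_sym (negbTE nUT) mulr0 mul0r.
Qed.

Definition deg_jac : nat := (\sum_(i < r) e i)%N.
Definition esum (S : {set 'I_r}) : nat := (\sum_(i in S) e i)%N.

Lemma esum_split S : deg_jac = (esum S + \sum_(i | i \notin S) e i)%N.
Proof. by rewrite /deg_jac /esum (bigID (mem S)). Qed.

Lemma esum_le S : (esum S <= deg_jac)%N.
Proof. by rewrite (esum_split S) leq_addr. Qed.

Lemma det_Omega_dhomog : \det Omega \is deg_jac.-homog.
Proof. by case: omegaG => omega_homog _ _ _; apply: det_dhomog => a b; rewrite mxE. Qed.

Lemma compound_Omega_dhomog j (S' T : {set 'I_r}) : #|S'| = j ->
  compound j Omega S' T \is (esum S').-homog.
Proof.
move=> cS; case: omegaG => omega_homog _ _ _.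
pose e_nat k := if @insub _ (fun x => x < r)%N 'I_r k is Some i then e i else 0%N.
have -> : esum S' = (\sum_(a < j) e_nat (enum_nat S' a))%N.
  subst j; rewrite /esum big_enum_val; apply: eq_bigr => a _.
  by rewrite enum_nat_enum_val /e_nat valK.
apply: det_dhomog => a b; rewrite mxE /nat_entry /e_nat.
case: (insub (enum_nat S' a) : option 'I_r) => [i|]; last exact: dhomog0.
by case: (insub (enum_nat T b) : option 'I_r) => [k|]; [rewrite mxE | exact: dhomog0].
Qed.

Lemma higher_adj_Omega_dhomog j (T S : {set 'I_r}) : #|S| = j ->
  higher_adj j Omega T S \is (deg_jac - esum S)%N.-homog.
Proof.
move=> cS; case: omegaG => omega_homog _ _ _.
have -> : (deg_jac - esum S = \sum_(i < r) (if i \in S then 0 else e i))%N.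
  by rewrite (esum_split S) addKn big_mkcond /=; apply: eq_bigr => i _; case: (i \in S).
apply: det_dhomog => i k; rewrite mxE.
case: pickP => [a /eqP ha|none].
  have ha' : (a < #|S|)%N by rewrite cS.
  have -> : i \in S.
    by case: (enum_natP ha') => u uS eu; rewrite (_ : i = u) //; apply: val_inj; rewrite /= -ha eu.
  rewrite mxE /nat_row; case: (insub (enum_nat T a) : option 'I_r) => [x|]; last exact: dhomog0.
  by rewrite mxE; apply: rpredMn; apply: dhomog1.
have -> : (i \in S) = false.
  apply/negbTE/negP => iS; case: (enum_nat_index iS) => ha et.
  have ha' : (index i (enum S) < j)%N by rewrite -cS.
  by move: (none (Ordinal ha')); rewrite /= et eqxx.
by rewrite mxE.
Qed.

Variable Q : R.
Hypothesis DeltaE : Delta = Q * jac omega.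

Lemma det_Omega_neq0 : \det Omega != 0.
Proof.
case: DeltaG => _ Delta_neq0 _ _.
by apply: contra Delta_neq0 => /eqP det0; rewrite DeltaE jacE det0 mulr0.
Qed.

Lemma wedge_Omega_inj w1 w2 : (forall S', wedge_Omega w1 S' = wedge_Omega w2 S') -> w1 = w2.
Proof.
move=> h; apply/ffunP => T; apply: (mulfI (expf_neq0 #|T| det_Omega_neq0)).
by rewrite !wedge_Omega_adj; apply: eq_bigr => S' _; rewrite h.
Qed.

Lemma wact_semiP w g : g \in G ->
  wact rho sigma g w = chi g *: w <->
  (forall S', sact rho g (wedge_Omega w S') = chi g *: wedge_Omega w S').
Proof.
move=> gG; split=> [wg S'|h]; first by rewrite -wedge_Omega_wact // wg wedge_OmegaZ.
by apply: wedge_Omega_inj => S'; rewrite wedge_Omega_wact // h wedge_OmegaZ.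
Qed.

Lemma Q_dhomog : Q \is (delta - deg_jac)%N.-homog /\ (deg_jac <= delta)%N.
Proof.
case: DeltaG => Delta_homog Delta_neq0 _ _.
rewrite DeltaE jacE in Delta_homog Delta_neq0.
have [-> Q_deg] := dhomog_factor det_Omega_dhomog det_Omega_neq0 Delta_homog.
by split=> //; apply: Q_deg; apply: contra Delta_neq0 => /eqP ->; rewrite mul0r.
Qed.

Definition semi_basis (S : {set 'I_r}) : W :=
  [ffun T : {set 'I_r} => if #|T| == #|S| then Q * higher_adj #|S| Omega T S else 0].

Lemma wedge_Omega_semi_basis S S' : wedge_Omega (semi_basis S) S' = (S' == S)%:R * Delta.
Proof.
rewrite ffunE; case: (eqVneq #|S'| #|S|) => cS.
  under eq_bigr => T /eqP cT do rewrite ffunE cT cS eqxx mulrCA.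
  by rewrite cS -mulr_sumr mul_compound_higher_adj // DeltaE jacE mulrCA.
rewrite (_ : S' == S = false); last by apply/negbTE; apply: contra cS => /eqP ->.
by rewrite mul0r big1 // => T /eqP cT; rewrite ffunE cT (negbTE cS) mulr0.
Qed.


Section Piece.
Variables (deg j : nat).

(* Exceeds the total degree of every monomial that can occur in a piece. *)
Definition mon_bound : nat := (deg + deg_jac).+1.
Local Notation Ix := ({set 'I_r} * 'X_{1..n < mon_bound})%type.

Definition piece_index : {set Ix} :=
  [set x : Ix | (#|x.1| == j) && (wdeg d x.2 + delta == deg + esum x.1)%N].

Definition piece_vec (x : Ix) : W := pscale (inv_monomial f x.2) (semi_basis x.1).

Lemma sum_piece_index (V : nmodType) (H : Ix -> V) :
  \sum_(x in piece_index) H x = \sum_(S : {set 'I_r}) \sum_(mu | (S, mu) \in piece_index) H (S, mu).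
Proof. by rewrite pair_big_dep; apply: eq_big => [[S mu]|[S mu] _]. Qed.

Lemma wedge_Omega_piece_comb (c : Ix -> F) S' :
  wedge_Omega (\sum_(x in piece_index) c x *: piece_vec x) S' =
  (\sum_(mu | (S', mu) \in piece_index) c (S', mu) *: inv_monomial f mu) * Delta.
Proof.
rewrite wedge_Omega_sum sum_piece_index (bigD1 S') // [in LHS]/= [X in _ + X = _]big1.
  rewrite addr0 mulr_suml; apply: eq_bigr => mu _.
  by rewrite wedge_Omega_pscale wedge_Omega_semi_basis eqxx mul1r scalerAl.
move=> S nS; apply: big1 => mu _; rewrite wedge_Omega_pscale wedge_Omega_semi_basis /= eq_sym.
by rewrite (negbTE nS) mul0r mulr0 scaler0.
Qed.

Lemma piece_vec_chi_piece x : x \in piece_index -> chi_piece G rho sigma chi deg j (piece_vec x).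
Proof.
case: x => S mu; rewrite inE => /andP [/eqP /= cS /eqP /= wmu].
have [Q_homog le_jac] := Q_dhomog; have le_esum := esum_le S.
split=> [T nT | T | g gG].
- by rewrite !ffunE cS (negbTE nT) mulr0.
- rewrite !ffunE; case: eqP => cT; last by rewrite mulr0; apply: dhomog0.
  have -> : deg = (wdeg d mu + ((delta - deg_jac) + (deg_jac - esum S)))%N by lia.
  apply: dhomogM; first exact: inv_monomial_dhomog fG _.
  by apply: dhomogM => //; apply: higher_adj_Omega_dhomog.
- apply/(wact_semiP _ gG) => S'; case: DeltaG => _ _ Delta_semi _.
  rewrite wedge_Omega_pscale wedge_Omega_semi_basis sactE !rmorphM /= rmorph_nat.
  by rewrite -!sactE (inv_monomial_invariant fG) // Delta_semi // !scalerAr.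
Qed.

Lemma piece_vec_free (c : Ix -> F) :
  \sum_(x in piece_index) c x *: piece_vec x = 0 -> forall x, x \in piece_index -> c x = 0.
Proof.
move=> h [S mu] x_in; have := congr1 (fun w => wedge_Omega w S) h.
rewrite /= wedge_Omega_piece_comb wedge_Omega0 => /eqP.
case: DeltaG => _ Delta_neq0 _ _; rewrite mulf_eq0 (negbTE Delta_neq0) orbF => /eqP.
by move/(inv_monomial_free fG (B := fun mu => (S, mu) \in piece_index)); apply.
Qed.

Lemma wedge_Omega_chi_piece w S' : chi_piece G rho sigma chi deg j w ->
  exists b : 'X_{1..n < mon_bound} -> F,
    wedge_Omega w S' = (\sum_(mu | (S', mu) \in piece_index) b mu *: inv_monomial f mu) * Delta.
Proof.
case=> w_supp w_homog w_semi; case: DeltaG => Delta_homog Delta_neq0 _ Delta_gen.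
case: (eqVneq #|S'| j) => cS; last first.
  exists (fun=> 0); rewrite big_pred0 => [|mu]; last by rewrite inE /= (negbTE cS).
  by rewrite mul0r ffunE big1 // => T /eqP cT; rewrite w_supp ?mulr0 // cT.
have [c [c_inv wc]] : exists c, Defs.invariant G rho c /\ wedge_Omega w S' = c * Delta.
  by apply: Delta_gen => g gG; apply: (wact_semiP w gG).1; apply: w_semi.
have : wedge_Omega w S' \is (esum S' + deg)%N.-homog.
  rewrite ffunE; apply: rpred_sum => T /eqP cT.
  by apply: dhomogM; [apply: compound_Omega_dhomog | apply: w_homog].
rewrite wc => /(dhomog_factor Delta_homog Delta_neq0) [c_homog c_deg].
have [->|c_neq0] := eqVneq c 0.
  by exists (fun=> 0); rewrite big1 // => mu _; rewrite scale0r.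
have le_delta := c_deg c_neq0; have le_esum := esum_le S'.
have [|b ->] := invariant_dhomog_span fG c_inv c_homog (Nb := mon_bound).
  by rewrite /mon_bound; lia.
exists b; congr (_ * _); apply: eq_bigl => mu; rewrite inE /= cS eqxx /=.
by apply/eqP/eqP; lia.
Qed.

Lemma piece_vec_span w : chi_piece G rho sigma chi deg j w ->
  exists c : Ix -> F, w = \sum_(x in piece_index) c x *: piece_vec x.
Proof.
move=> wP; have /fin_all_exists [b wb] := fun S' => wedge_Omega_chi_piece S' wP.
by exists (fun x => b x.1 x.2); apply: wedge_Omega_inj => S'; rewrite wedge_Omega_piece_comb wb.
Qed.

Lemma card_piece_fiber (S : {set 'I_r}) : #|S| = j ->
  #|[set mu | (S, mu) \in piece_index]| = nsol d (Posz deg - delta%:Z + (esum S)%:Z).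
Proof.
move=> cS; have [_ le_jac] := Q_dhomog; have le_esum := esum_le S.
case: (leqP delta (deg + esum S)) => hle.
  have -> : (Posz deg - delta%:Z + (esum S)%:Z = Posz (deg + esum S - delta))%R by lia.
  rewrite /nsol -(card_wdeg fG (Nb := mon_bound)); last by rewrite /mon_bound; lia.
  by apply: eq_card => mu; rewrite !inE /= cS eqxx /=; apply/eqP/eqP; lia.
have : (Posz deg - delta%:Z + (esum S)%:Z < 0)%R by lia.
case: (Posz deg - delta%:Z + (esum S)%:Z)%R => [k|k] hk; first by lia.
by apply: eq_card0 => mu; rewrite !inE /= cS eqxx /=; apply/negbTE/eqP; lia.
Qed.

Lemma card_piece_index : #|piece_index| = rhs_coef d e delta (Posz deg) j.
Proof.
rewrite /rhs_coef -sum1_card.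
transitivity (\sum_(S : {set 'I_r}) \sum_(mu | (S, mu) \in piece_index) 1)%N.
  by rewrite pair_big_dep; apply: eq_big => [[S mu]|[S mu] _].
rewrite (bigID (fun S : {set 'I_r} => #|S| == j)) /= [X in (_ + X)%N]big1 ?addn0; last first.
  by move=> S nS; rewrite big_pred0 // => mu; rewrite inE /= (negbTE nS).
apply: eq_bigr => S /eqP cS; rewrite -card_piece_fiber // -sum1_card.
by apply: eq_bigl => mu; rewrite inE.
Qed.

Lemma piece_dim : has_dim (chi_piece G rho sigma chi deg j) (rhs_coef d e delta (Posz deg) j).
Proof.
rewrite -card_piece_index.
exact: has_dim_basis piece_vec_chi_piece piece_vec_free piece_vec_span.
Qed.

End Piece.

Lemma rhs_coef_neg (a : int) j : (a < 0)%R -> rhs_coef d e delta a j = 0%N.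
Proof.
move=> a_lt0; rewrite /rhs_coef big1 // => S _.
have [_ le_jac] := Q_dhomog; have le_esum := esum_le S.
have : (a - delta%:Z + (esum S)%:Z < 0)%R by lia.
by case: (a - delta%:Z + (esum S)%:Z)%R => [k|k] hk //; lia.
Qed.

End SemiInvariants.

Theorem corollary4p11
  (F : fieldType) (n r : nat) (gT : finGroupType) (G : {group gT})
  (rho : mx_representation F G n) (sigma : mx_representation F G r)
  (chi : gT -> F)
  (f : 'I_n -> {mpoly F[n]}) (d : 'I_n -> nat)
  (Delta : {mpoly F[n]}) (delta : nat)
  (omega : 'I_r -> {ffun 'I_r -> {mpoly F[n]}}) (e : 'I_r -> nat) :
  [pchar F] =i pred0 ->
  mx_faithful rho ->
  generated_by_pseudo_reflections G rho ->
  linear_char G chi ->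
  basic_invariants G rho f d ->
  semi_inv_generator G rho chi Delta delta ->
  exponent_basis G rho sigma omega e ->
  (exists Q : {mpoly F[n]}, Delta = Q * jac omega) ->
  (forall (deg : nat) (j : nat),
      has_dim (chi_piece G rho sigma chi deg j) (rhs_coef d e delta (Posz deg) j)) /\
  (forall (a : int) (j : nat), a < 0 -> rhs_coef d e delta a j = 0%N).
Proof.
move=> _ _ _ _ fG DeltaG omegaG [Q DeltaE]; split=> [deg j | a j].
  exact: (piece_dim fG DeltaG omegaG DeltaE).
exact: (rhs_coef_neg d DeltaG omegaG DeltaE).
Qed.
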